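(* Assume the Standing Setup. Let $n\ge1$, let $\vec A$ be a time-dependent vector field in $\mathcal F$ which is $n$-admissible for $\mathcal G$, let $\vec\Delta\in H^0(X,\mathcal F)$ with $\vec\Delta|_Y\in H^0(Y,\mathcal G)$, and let $\vec E\in H^0(X,\mathcal F)$ be any time-independent vector field. Set $\vec B:=\vec A+\frac{t^n}{n!}\vec\Delta+\frac{t^{n+1}}{(n+1)!}\vec E$. Then for all $1\le m\le n$, $$\mathcal L^m_{D(\vec B)}\vec B\equiv \mathcal L^m_{D(\vec A)}\vec A+\tfrac{t^{n-m}}{(n-m)!}\vec\Delta \pmod{t^{n-m+1}},$$ and $$\mathcal L^{n+1}_{D(\vec B)}\vec B\equiv\mathcal L^{n+1}_{D(\vec A)}\vec A+\vec E+n[\vec A,\vec\Delta]\pmod{t}.$$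
   Context: Standing Setup: $X$ is a complex manifold, $\mathcal F\subseteq T_X$ a Lie-closed subsheaf of $\mathbb C_X$-modules ($\mathbb C_X$ = locally constant functions), $Y\subseteq X$ a reduced complex subspace with inclusion $f$, $\mathcal F_Y:=\operatorname{Im}(f^{-1}\mathcal F\to f^*T_X)$, $\mathcal G\subseteq\mathcal F_Y$ an obstruction sheaf for $\mathcal F$ (for every open $U\subseteq X$ and $\vec A_1,\vec A_2\in\mathcal F(U)$ with $f^*\vec A_1=f^*\vec A_2$ on $f^{-1}(U)$, $f^*[\vec A_1,\vec A_2]\in\mathcal G(f^{-1}(U))$). A time-dependent vector field is a section of $p_X^*T_X$ over $X\times\mathbb C$ ($t$ the coordinate of $\mathbb C$, $p_X$ the projection), viewed inside $T_{X\times\mathbb C}$; it is in $\mathcal F$ if it equals $\sum_{i=0}^N t^i\vec A_i$ with $\vec A_i\in H^0(X,\mathcal F)$; time-independent fields on $X$ are regarded as time-dependent via pull-back. $\vec A_0|_Y$ denotes the image in $H^0(Y,f^*T_X)$ of the restriction to time $0$. $D(\vec A):=\partial/\partial t+\vec A$, $\mathcal L_{\vec V}\vec W:=[\vec V,\vec W]$ on $X\times\mathbb C$, $\mathcal L^m$ its $m$-fold iterate. $\vec A$ is $n$-admissible for $\mathcal G$ if $(\mathcal L^m_{D(\vec A)}\vec A)_0|_Y\in H^0(Y,\mathcal G)$ for $1\le m\le n$. For time-dependent fields $\vec V,\vec W$, $\vec V\equiv\vec W\pmod{t^k}$ means $\vec V-\vec W=t^k\vec U$ for some time-dependent vector field $\vec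 U$. *)

From HB Require Import structures.
From mathcomp Require Import all_boot all_order all_algebra.
Set Implicit Arguments. Unset Strict Implicit. Unset Printing Implicit Defensive.
Import GRing.Theory.
Local Open Scope ring_scope.

(* br is a K-bilinear Lie bracket on L (here L models H^0(X,F), which is a
   Lie algebra over the constants since F is Lie-closed). *)
Definition lie_bracket (K : fieldType) (L : lmodType K) (br : L -> L -> L) : Prop :=
  [/\ forall (a : K) x y z, br (a *: x + y) z = a *: br x z + br y z,
      forall (a : K) x y z, br x (a *: y + z) = a *: br x y + br x z,
      forall x, br x x = 0 &
      forall x y z, br x (br y z) + br y (br z x) + br z (br x y) = 0].

(* A time-dependent vector field "in F" is sum_i t^i V_i with V_i in L;
   we represent it by its coefficient sequence V : nat -> L (V i = coeff of t^i). *)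
Definition tdvf_in_F (K : fieldType) (L : lmodType K) (V : nat -> L) : Prop :=
  exists N : nat, forall i : nat, (N < i)%N -> V i = 0.

Definition tconst (K : fieldType) (L : lmodType K) (D : L) : nat -> L :=
  fun i => if i == 0%N then D else 0.

Definition tmono (K : fieldType) (L : lmodType K) (n : nat) (D : L) : nat -> L :=
  fun i => if i == n then ((n`!)%:R : K)^-1 *: D else 0.

Definition tderiv (K : fieldType) (L : lmodType K) (V : nat -> L) : nat -> L :=
  fun i => V i.+1 *+ i.+1.

Definition tbr (K : fieldType) (L : lmodType K) (br : L -> L -> L)
  (V W : nat -> L) : nat -> L :=
  fun k => \sum_(i < k.+1) br (V i) (W (k - i)%N).

(* L_{D(A)} W = [d/dt + A, W] = dW/dt + [A, W] *)
Definition LieD (K : fieldType) (L : lmodType K) (br : L -> L -> L)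
  (A W : nat -> L) : nat -> L :=
  fun k => tderiv W k + tbr br A W k.

Definition LieIter (K : fieldType) (L : lmodType K) (br : L -> L -> L)
  (A : nat -> L) (m : nat) : nat -> L :=
  iter m (LieD br A) A.

Definition eqmod_t (K : fieldType) (L : lmodType K) (k : nat) (V W : nat -> L) : Prop :=
  forall i : nat, (i < k)%N -> V i = W i.

(* res models restriction H^0(X,F) -> H^0(Y, f^* T_X); G models H^0(Y,G). *)
Definition obstruction (K : fieldType) (L M : lmodType K) (br : L -> L -> L)
  (res : L -> M) (G : pred M) : Prop :=
  forall A1 A2 : L, res A1 = res A2 -> G (res (br A1 A2)).

Definition admissible (K : fieldType) (L M : lmodType K) (br : L -> L -> L)
  (res : L -> M) (G : pred M) (n : nat) (A : nat -> L) : Prop :=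
  forall m : nat, (1 <= m <= n)%N -> G (res (LieIter br A m 0%N)).

From HB Require Import structures.
From mathcomp Require Import all_boot all_order all_algebra.
From mathcomp Require Import zify.
Import GRing.Theory.
Local Open Scope ring_scope.
Set Implicit Arguments. Unset Strict Implicit.

(* Write [B = A + P] with [P = t^n/n! Delta + t^(n+1)/(n+1)! E]. Each application
   of [L_(D(B))] acts on the perturbation [P] mainly through [d/dt], which lowers
   the degree by one and cancels the factorial; the brackets only contribute in
   the top retained degree. Hence after [m] steps the perturbation is
   [t^(n-m)/(n-m)! Delta + t^(n-m+1)/(n-m+1)! (E + (m-1)[A_0, Delta])] modulo
   [t^(n-m+2)]. In the very first step the two brackets [A_0, t^n/n! Delta] and
   [t^n/n! Delta, A_0] cancel by antisymmetry, which is why the coefficient of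
   [[A_0, Delta]] is [m - 1] and not [m]. *)

Section Bracket.
Variables (K : fieldType) (L : lmodType K) (br : L -> L -> L).
Hypothesis hbr : lie_bracket br.

Lemma brDl x y z : br (x + y) z = br x z + br y z.
Proof. by case: hbr => hl _ _ _; have := hl 1 x y z; rewrite !scale1r. Qed.

Lemma brDr x y z : br x (y + z) = br x y + br x z.
Proof. by case: hbr => _ hr _ _; have := hr 1 x y z; rewrite !scale1r. Qed.

Lemma br0l z : br 0 z = 0.
Proof. by apply: (addrI (br 0 z)); rewrite -brDl !addr0. Qed.

Lemma br0r z : br z 0 = 0.
Proof. by apply: (addrI (br z 0)); rewrite -brDr !addr0. Qed.

Lemma brZr a x z : br z (a *: x) = a *: br z x.
Proof. by case: hbr => _ hr _ _; have := hr a z x 0; rewrite !addr0 br0r addr0. Qed.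

Lemma brC x y : br y x = - br x y.
Proof.
case: hbr => _ _ halt _; apply/eqP; rewrite -addr_eq0 addrC.
by have := halt (x + y); rewrite brDl !brDr !halt add0r addr0 => ->.
Qed.

End Bracket.

Section TimeDependentFields.
Variables (K : fieldType) (L : lmodType K) (br : L -> L -> L).
Hypothesis hbr : lie_bracket br.

Definition mono (d : nat) (x : L) : nat -> L := fun i => if i == d then x else 0.

Lemma tmonoE d (D : L) : tmono d D = mono d ((d`!)%:R^-1 *: D).
Proof. by []. Qed.

Lemma tderiv_mono d x i : tderiv (mono d x) i = mono d.-1 (x *+ d) i.
Proof.
rewrite /tderiv /mono; case: d => [|d] /=; first by rewrite mul0rn mulr0n if_same.
by rewrite eqSS; case: eqP => [->|]; rewrite ?mul0rn.
Qed.

Lemma tbrDl V W U k :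
  tbr br (fun j => V j + W j) U k = tbr br V U k + tbr br W U k.
Proof. by rewrite /tbr -big_split; apply: eq_bigr => i _; apply: brDl. Qed.

Lemma tbrDr V W U k :
  tbr br U (fun j => V j + W j) k = tbr br U V k + tbr br U W k.
Proof. by rewrite /tbr -big_split; apply: eq_bigr => i _; apply: brDr. Qed.

Lemma tbr_monol d x W k :
  tbr br (mono d x) W k = if (d <= k)%N then br x (W (k - d)%N) else 0.
Proof.
rewrite /tbr (eq_bigr (fun i : 'I_k.+1 =>
  if nat_of_ord i == d then br x (W (k - i)%N) else 0)).
  by rewrite -big_mkcond (big_ord1_eq _ (fun j => br x (W (k - j)%N))) ltnS.
by move=> i _; rewrite /mono; case: eqP => //; rewrite br0l.
Qed.

Lemma tbr_monor d x V k :
  tbr br V (mono d x) k = if (d <= k)%N then br (V (k - d)%N) x else 0.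
Proof.
rewrite /tbr (reindex_inj rev_ord_inj) /= (eq_bigr (fun i : 'I_k.+1 =>
  if nat_of_ord i == d then br (V (k - i)%N) x else 0)).
  by rewrite -big_mkcond (big_ord1_eq _ (fun j => br (V (k - j)%N) x)) ltnS.
by move=> [i hi] _ /=; rewrite subSS subKn // /mono; case: eqP => //; rewrite br0r.
Qed.

Lemma tbr_eqmod k V V' W W' :
  eqmod_t k V V' -> eqmod_t k W W' -> eqmod_t k (tbr br V W) (tbr br V' W').
Proof.
move=> eqV eqW i lt_ik; rewrite /tbr; apply: eq_bigr => [[j lt_ji]] _ /=.
by rewrite eqV ?eqW //; lia.
Qed.

Lemma LieD_eqmod k A W W' :
  eqmod_t k.+1 W W' -> eqmod_t k (LieD br A W) (LieD br A W').
Proof.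
move=> eqW i lt_ik; rewrite /LieD /tderiv eqW //.
by congr (_ + _); apply: tbr_eqmod => // j lt_jk; apply: eqW; lia.
Qed.

(* For [d = 0] the term [mono d.-1 (a *+ d)] is [mono 0 0], so the truncated
   predecessor is harmless. *)
Lemma LieD_perturb (A Am : nat -> L) (a0 e0 a c : L) (n d : nat) :
  (0 < n)%N -> (d <= n)%N ->
  eqmod_t d.+1
    (LieD br (fun i => A i + mono n a0 i + mono n.+1 e0 i)
             (fun i => Am i + mono d a i + mono d.+1 c i))
    (fun i => LieD br A Am i + mono d.-1 (a *+ d) i
       + mono d (c *+ d.+1 + br (A 0%N) a + (if d == n then br a0 (Am 0%N) else 0)) i).
Proof.
move=> n_gt0 le_dn i lt_id; rewrite /LieD.
have -> : tderiv (fun j => Am j + mono d a j + mono d.+1 c j) i =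
          tderiv Am i + tderiv (mono d a) i + tderiv (mono d.+1 c) i.
  by rewrite /tderiv !mulrnDl.
rewrite !tbrDl !tbrDr !tbr_monol !tbr_monor !tderiv_mono /=.
have -> : (d.+1 <= i)%N = false by lia.
have -> : (n.+1 <= i)%N = false by lia.
have [-> {lt_id} | ne_id] := eqVneq i d; last first.
  have mono_i x : mono d x i = 0 by rewrite /mono ifN.
  have -> : (d <= i)%N = false by lia.
  have -> : (n <= i)%N = false by lia.
  by rewrite !mono_i !addr0 addrAC.
have mono_d x : mono d x d = x by rewrite /mono eqxx.
rewrite !mono_d leqnn subnn.
have [eq_dn | ne_dn] := eqVneq d n; last first.
  have -> : (n <= d)%N = false by lia.
  rewrite !addr0 -!addrA; congr (_ + _).
  by rewrite [RHS]addrCA; congr (_ + _); apply: addrCA.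
have mono_0 k x : (0 < k)%N -> mono k x 0 = 0.
  by move=> k_gt0; rewrite /mono ifN // eq_sym -lt0n.
subst d; rewrite leqnn subnn !mono_0 // !(br0r hbr) !addr0 -!addrA; congr (_ + _).
by rewrite [RHS]addrCA; congr (_ + _); apply: addrCA.
Qed.

Lemma scale_invfact_mulrn (hK : [pchar K] =i pred0) k (v : L) :
  ((k.+1)`!%:R : K)^-1 *: v *+ k.+1 = ((k`!)%:R : K)^-1 *: v.
Proof.
have nz_nat j : (j.+1%:R : K) != 0 by rewrite (pcharf0P _).1.
have nz_fact j : ((j`!)%:R : K) != 0 by rewrite (pcharf0P _).1 // -lt0n fact_gt0.
by rewrite -scaler_nat scalerA factS natrM invfM mulrA mulfV ?mul1r.
Qed.

Lemma LieIter_perturb (hK : [pchar K] =i pred0) (A : nat -> L) (Delta E : L) n m :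
  (0 < n)%N -> (m <= n)%N ->
  eqmod_t (n - m).+2
    (LieIter br (fun i => A i + tmono n Delta i + tmono n.+1 E i) m)
    (fun i => LieIter br A m i + tmono (n - m) Delta i
              + tmono (n - m).+1 (E + br (A 0%N) Delta *+ m.-1) i).
Proof.
move=> n_gt0; elim: m => [|m IH] le_mn i lt_i.
  by rewrite /= subn0 mulr0n addr0.
have [d eq_d] : exists d, (n - m)%N = d.+1 by exists (n - m.+1)%N; lia.
have -> : (n - m.+1)%N = d by lia.
rewrite /LieIter iterS -/(LieIter br _ m) (LieD_eqmod _ (IH (ltnW le_mn))); last lia.
rewrite eq_d !tmonoE LieD_perturb //=; [|lia..].
rewrite !scale_invfact_mulrn // (brZr hbr); congr (_ + _ + mono _ _ i).
have [m0 | m_gt0] := posnP m.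
  rewrite m0 subn0 in eq_d; subst m n.
  by rewrite eqxx mulr0n addr0 [br (_ *: Delta) _](brC hbr) (brZr hbr) addrK.
have -> : (d.+1 == n) = false by lia.
by rewrite addr0 -scalerDr -addrA -mulrSr prednK.
Qed.

End TimeDependentFields.

Theorem mainTheorem5 (K : fieldType) (L M : lmodType K)
  (br : L -> L -> L) (res : L -> M) (G : pred M)
  (hK : [pchar K] =i pred0)
  (hbr : lie_bracket br)
  (hres : linear_for *:%R res)
  (hG : forall (a : K) (u v : M), G u -> G v -> G (a *: u + v))
  (hG0 : G 0)
  (hobs : obstruction br res G)
  (n : nat) (hn : (1 <= n)%N)
  (A : nat -> L) (hA : tdvf_in_F A) (hadm : admissible br res G n A)
  (Delta E : L) (hD : G (res Delta)) :
  let B := fun i => A i + tmono n Delta i + tmono n.+1 E i in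
  (forall m : nat, (1 <= m <= n)%N ->
     eqmod_t (n - m).+1 (LieIter br B m)
       (fun i => LieIter br A m i + tmono (n - m) Delta i)) /\
  eqmod_t 1 (LieIter br B n.+1)
    (fun i => LieIter br A n.+1 i + tconst E i + tbr br A (tconst Delta) i *+ n).
Proof.
move=> B; have perturb := LieIter_perturb hbr hK A Delta E hn.
split=> [m /andP[_ le_mn] i lt_i | [|//] _].
  rewrite perturb //; last lia.
  have -> : tmono (n - m).+1 (E + br (A 0%N) Delta *+ m.-1) i = 0.
    by rewrite /tmono; case: eqP => //; lia.
  by rewrite addr0.
rewrite /LieIter iterS -/(LieIter br B n) (LieD_eqmod br _ (perturb n (leqnn n))) //.
rewrite subnn /B !tmonoE LieD_perturb //=.
rewrite /tbr big_ord1 /tconst /mono /= factS fact0 !invr1 !scale1r mulr1n !addr0.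
have -> : (0 == n) = false by lia.
by rewrite addr0 -[E + _ + _]addrA -mulrSr prednK // addrA.
Qed.
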